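(* Fix any configuration of open and closed sites on $\mathcal{L}$, and let $\tau=\inf\{n\ge0:\xi_n=\emptyset\}$. Then $$\tau=\inf\{m\ge0:\underline{\ell}_m>\overline{u}_m\}.$$
   Context: Let $\mathcal{L}=\{(n,m)\in\mathbb{Z}^2:n\ge0,\ n+m\text{ even}\}$. Each site of $\mathcal{L}$ is open or closed. For $z,z'\in\mathcal{L}$ write $z\to z'$ if there exist $k\ge0$ and sites $z=z_0,\dots,z_k=z'$ of $\mathcal{L}$ such that $z_0,\dots,z_{k-1}$ are open and $z_{i+1}-z_i\in\{(1,1),(2,0),(1,-1)\}$ for every $i$. Let $o=(0,0)$. Use the conventions $\sup\emptyset=-\infty$ and $\inf\emptyset=+\infty$. Define $\xi_n=\{x:o\to(n,x)\}$. Set $\overline{u}_0=\underline{\ell}_0=0$. For $n\ge1$, let $$\overline{\xi}_n=\{x:\exists y\le0\text{ such that }(0,y)\to(n,x)\text{ or }(1,y)\to(n,x)\}$$ and $\overline{u}_n=\sup\overline{\xi}_n$. Let $$\underline{\xi}_n=\{x:\exists y\ge0\text{ such that }(0,y)\to(n,x)\text{ or }(1,y)\to(n,x)\}$$ and $\underline{\ell}_n=\inf\underline{\xi}_n$. In all these definitions only sites of $\mathcal{L}$ are considered. *)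

From Stdlib Require Import ZArith ClassicalEpsilon.
Open Scope Z_scope.

Definition inL (z : Z * Z) : Prop := 0 <= fst z /\ Z.Even (fst z + snd z).

Definition step (z w : Z * Z) : Prop :=
  w = (fst z + 1, snd z + 1) \/ w = (fst z + 2, snd z) \/ w = (fst z + 1, snd z - 1).

(* A configuration: open z = true iff site z is open. *)
Definition config := Z * Z -> bool.

Inductive reach (om : config) : Z * Z -> Z * Z -> Prop :=
| reach_refl z : inL z -> reach om z z
| reach_step z w z' : inL z -> om z = true -> step z w -> reach om w z' -> reach om z z'.

Inductive zbar := ZNinf | ZFin (x : Z) | ZPinf.

Definition zlt (a b : zbar) : Prop :=
  match a, b with
  | ZNinf, ZNinf => False
  | ZNinf, _ => True
  | ZFin x, ZFin y => x < y
  | ZFin _, ZPinf => True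
  | ZFin _, ZNinf => False
  | ZPinf, _ => False
  end.

Definition zsup (A : Z -> Prop) : zbar :=
  match excluded_middle_informative (exists x, A x) with
  | right _ => ZNinf
  | left _ =>
    match excluded_middle_informative (exists b, forall x, A x -> x <= b) with
    | right _ => ZPinf
    | left _ => ZFin (epsilon (inhabits 0) (fun x => A x /\ forall y, A y -> y <= x))
    end
  end.

Definition zinf (A : Z -> Prop) : zbar :=
  match excluded_middle_informative (exists x, A x) with
  | right _ => ZPinf
  | left _ =>
    match excluded_middle_informative (exists b, forall x, A x -> b <= x) with
    | right _ => ZNinf
    | left _ => ZFin (epsilon (inhabits 0) (fun x => A x /\ forall y, A y -> x <= y))
    end
  end.

(* inf of a set of naturals in nat ∪ {+oo} (None = +oo), inf ∅ = +oo. *)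
Definition nat_inf (P : nat -> Prop) : option nat :=
  match excluded_middle_informative (exists n, P n) with
  | right _ => None
  | left _ => Some (epsilon (inhabits 0%nat) (fun n => P n /\ forall k, P k -> (n <= k)%nat))
  end.

Definition xi (om : config) (n : nat) : Z -> Prop :=
  fun x => reach om (0, 0) (Z.of_nat n, x).

Definition xi_up (om : config) (n : nat) : Z -> Prop :=
  fun x => exists y, y <= 0 /\
    (reach om (0, y) (Z.of_nat n, x) \/ reach om (1, y) (Z.of_nat n, x)).

Definition xi_low (om : config) (n : nat) : Z -> Prop :=
  fun x => exists y, 0 <= y /\
    (reach om (0, y) (Z.of_nat n, x) \/ reach om (1, y) (Z.of_nat n, x)).

Definition u_up (om : config) (n : nat) : zbar :=
  match n with O => ZFin 0 | _ => zsup (xi_up om n) end.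

Definition l_low (om : config) (n : nat) : zbar :=
  match n with O => ZFin 0 | _ => zinf (xi_low om n) end.

Definition tau (om : config) : option nat :=
  nat_inf (fun n => forall x, ~ xi om n x).

(* If x lies in xi_n, it lies in both overline-xi_n and underline-xi_n, so l_n <= u_n;
   hence separation forces xi_n to be empty.  Conversely, let xi_t contain c while
   xi_(t+1) is empty.  The open path from o to (t, c) cuts the columns 0..t in two: a path
   started at a non-positive height cannot get above it without meeting one of its sites,
   which are reachable from o, and would then end in xi_(t+1).  So overline-xi_(t+1) lies
   below c and, by the reflection m |-> -m, underline-xi_(t+1) lies above c. *)

From Stdlib Require Import ZArith Lia Classical ClassicalEpsilon Wf_nat.
Open Scope Z_scope.

Ltac parity := repeat match goal with
  | H : Z.Even _ |- _ => destruct H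
  | H : Z.Odd _ |- _ => destruct H
  end; lia.

Lemma nat_least_exists (P : nat -> Prop) :
  (exists n, P n) -> exists m, P m /\ forall k, P k -> (m <= k)%nat.
Proof.
  intros HP.
  destruct (dec_inh_nat_subset_has_unique_least_element P (fun n => classic (P n)) HP)
    as [m [Hm _]].
  now exists m.
Qed.

Lemma nat_inf_eq_least_sub (P Q : nat -> Prop) :
  (forall n, Q n -> P n) ->
  (forall m, P m -> (forall k, P k -> (m <= k)%nat) -> Q m) ->
  nat_inf P = nat_inf Q.
Proof.
  intros HQP HleastQ. unfold nat_inf.
  destruct (excluded_middle_informative (exists n, P n)) as [HP|HP];
  destruct (excluded_middle_informative (exists n, Q n)) as [HQ|HQ].
  - f_equal.
    destruct (epsilon_spec (inhabits 0%nat) _ (nat_least_exists P HP)) as [Pm Hm].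
    destruct (epsilon_spec (inhabits 0%nat) _ (nat_least_exists Q HQ)) as [Qq Hq].
    apply Nat.le_antisymm.
    + apply Hm, HQP, Qq.
    + apply Hq, HleastQ; assumption.
  - destruct (nat_least_exists P HP) as [m [Pm Hm]].
    exfalso; apply HQ; exists m; now apply HleastQ.
  - destruct HQ as [n Qn]. exfalso; apply HP; exists n; now apply HQP.
  - reflexivity.
Qed.

Lemma Z_max_exists (A : Z -> Prop) x b :
  A x -> (forall y, A y -> y <= b) -> exists m, A m /\ forall y, A y -> y <= m.
Proof.
  intros Ax Hb.
  destruct (nat_least_exists (fun n => A (b - Z.of_nat n))) as [n [An Hn]].
  { exists (Z.to_nat (b - x)). rewrite Z2Nat.id by (specialize (Hb x Ax); lia).
    now replace (b - (b - x)) with x by ring. }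
  exists (b - Z.of_nat n); split; [exact An|].
  intros y Ay. specialize (Hb y Ay).
  assert (Hy : A (b - Z.of_nat (Z.to_nat (b - y)))) by
    (rewrite Z2Nat.id by lia; now replace (b - (b - y)) with y by ring).
  specialize (Hn _ Hy). lia.
Qed.

Lemma Z_min_exists (A : Z -> Prop) x b :
  A x -> (forall y, A y -> b <= y) -> exists m, A m /\ forall y, A y -> m <= y.
Proof.
  intros Ax Hb.
  destruct (Z_max_exists (fun y => A (- y)) (- x) (- b)) as [m [Am Hm]].
  - now rewrite Z.opp_involutive.
  - intros y Ay. specialize (Hb _ Ay). lia.
  - exists (- m); split; [exact Am|].
    intros y Ay. specialize (Hm (- y)). rewrite Z.opp_involutive in Hm. specialize (Hm Ay). lia.
Qed.

Lemma zsup_spec (A : Z -> Prop) :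
  (zsup A = ZNinf /\ forall x, ~ A x) \/
  (exists s, zsup A = ZFin s /\ A s /\ forall y, A y -> y <= s) \/
  (zsup A = ZPinf /\ ~ exists b, forall x, A x -> x <= b).
Proof.
  unfold zsup.
  destruct (excluded_middle_informative (exists x, A x)) as [[x Ax]|HA].
  - destruct (excluded_middle_informative (exists b, forall x, A x -> x <= b)) as [[b Hb]|Hb].
    + right; left. eexists; split; [reflexivity|].
      apply epsilon_spec. exact (Z_max_exists A x b Ax Hb).
    + now right; right.
  - left; split; [reflexivity|]. intros x Ax; apply HA; now exists x.
Qed.

Lemma zinf_spec (A : Z -> Prop) :
  (zinf A = ZPinf /\ forall x, ~ A x) \/
  (exists s, zinf A = ZFin s /\ A s /\ forall y, A y -> s <= y) \/
  (zinf A = ZNinf /\ ~ exists b, forall x, A x -> b <= x).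
Proof.
  unfold zinf.
  destruct (excluded_middle_informative (exists x, A x)) as [[x Ax]|HA].
  - destruct (excluded_middle_informative (exists b, forall x, A x -> b <= x)) as [[b Hb]|Hb].
    + right; left. eexists; split; [reflexivity|].
      apply epsilon_spec. exact (Z_min_exists A x b Ax Hb).
    + now right; right.
  - left; split; [reflexivity|]. intros x Ax; apply HA; now exists x.
Qed.

Lemma zlt_zsup_zinf (A B : Z -> Prop) c :
  (forall a, A a -> a < c) -> (forall b, B b -> c < b) -> zlt (zsup A) (zinf B).
Proof.
  intros HA HB.
  destruct (zsup_spec A) as [[-> _]|[[s [-> [As _]]]|[_ Hu]]];
  destruct (zinf_spec B) as [[-> _]|[[r [-> [Br _]]]|[_ Hl]]]; simpl; auto;
  try (exfalso; apply Hu; exists c; intros a Aa; specialize (HA a Aa); lia);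
  try (exfalso; apply Hl; exists c; intros b Bb; specialize (HB b Bb); lia).
  specialize (HA s As). specialize (HB r Br). lia.
Qed.

Lemma zsup_zinf_not_lt (A B : Z -> Prop) x :
  A x -> B x -> ~ zlt (zsup A) (zinf B).
Proof.
  intros Ax Bx.
  destruct (zsup_spec A) as [[-> HA]|[[s [-> [_ Hs]]]|[-> _]]];
  destruct (zinf_spec B) as [[-> HB]|[[r [-> [_ Hr]]]|[-> _]]]; simpl; try tauto;
  try (now exfalso; apply (HA x)); try (now exfalso; apply (HB x)).
  specialize (Hs x Ax). specialize (Hr x Bx). lia.
Qed.

Lemma reach_inL om z z' : reach om z z' -> inL z.
Proof. now destruct 1. Qed.

Lemma reach_inL_end om z z' : reach om z z' -> inL z'.
Proof. induction 1; assumption. Qed.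

Lemma reach_fst_le om z z' : reach om z z' -> fst z <= fst z'.
Proof.
  induction 1 as [z Hz | z w z' Hz Ho Hs Hr IH]; [lia|].
  destruct Hs as [-> | [-> | ->]]; simpl in *; lia.
Qed.

Lemma reach_trans om z w z' : reach om z w -> reach om w z' -> reach om z z'.
Proof.
  induction 1; intros; [assumption|].
  eapply reach_step; eauto.
Qed.

Definition mirror (z : Z * Z) : Z * Z := (fst z, - snd z).

Definition mirror_config (om : config) : config := fun z => om (mirror z).

Lemma mirror_involutive z : mirror (mirror z) = z.
Proof. destruct z; unfold mirror; simpl; now rewrite Z.opp_involutive. Qed.

Lemma reach_mirror om om' z z' :
  (forall w, om' (mirror w) = om w) -> reach om z z' -> reach om' (mirror z) (mirror z').
Proof.
  intros Hom. induction 1 as [z Hz | z w z' Hz Ho Hs _ IH]; destruct Hz as [Hz Hp].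
  - apply reach_refl. split; simpl; [lia|]. destruct Hp as [p Hp]; exists (p - snd z). lia.
  - apply (reach_step _ _ (mirror w)); auto.
    + split; simpl; [lia|]. destruct Hp as [p Hp]; exists (p - snd z). lia.
    + now rewrite Hom.
    + destruct Hs as [-> | [-> | ->]]; unfold mirror; simpl;
        [right; right | right; left | left]; simpl; f_equal; lia.
Qed.

(* The height of a path in every column, frozen outside [fst z, fst z'].  A column where
   the parity is odd is one jumped over by a (2,0) step, so the profile is flat there. *)
Definition path_profile (om : config) (z z' : Z * Z) (g : Z -> Z) : Prop :=
  (forall k, k <= fst z -> g k = snd z) /\
  (forall k, fst z' <= k -> g k = snd z') /\
  (forall k, g k - 1 <= g (k + 1) <= g k + 1) /\
  (forall k, Z.Odd (k + g k) -> g (k + 1) = g k) /\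
  (forall k, fst z <= k <= fst z' -> Z.Even (k + g k) -> reach om z (k, g k)).

Lemma reach_path_profile om z z' : reach om z z' -> exists g, path_profile om z z' g.
Proof.
  induction 1 as [[k x] Hz | [k x] w z' Hz Ho Hs Hr [g [G1 [G2 [G3 [G4 G5]]]]]].
  - exists (fun _ => x). repeat split; intros; simpl in *; try lia.
    replace k0 with k by lia. now apply reach_refl.
  - pose proof (reach_fst_le _ _ _ Hr) as Hle. pose proof Hz as [_ Hp]; simpl in Hp.
    assert (Gw : g (fst w) = snd w) by (apply G1; lia).
    assert (Hw : (fst w = k + 1 /\ (snd w = x + 1 \/ snd w = x - 1)) \/
                 (fst w = k + 2 /\ snd w = x))
      by (destruct Hs as [-> | [-> | ->]]; simpl; auto).
    exists (fun j => if j <? fst w then x else g j).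
    refine (conj _ (conj _ (conj _ (conj _ _)))); simpl in *; intro j;
      destruct (Z.ltb_spec j (fst w)) as [Hj|Hj]; intros; try lia.
    + now apply G2.
    + destruct (Z.ltb_spec (j + 1) (fst w)); [lia|].
      replace (j + 1) with (fst w) by lia. lia.
    + destruct (Z.ltb_spec (j + 1) (fst w)); [lia|]. apply G3.
    + destruct (Z.ltb_spec (j + 1) (fst w)); [reflexivity|].
      replace (j + 1) with (fst w) by lia.
      destruct Hw as [[Ew _]|[_ Ew]]; [exfalso; replace j with k in * by lia; parity|lia].
    + destruct (Z.ltb_spec (j + 1) (fst w)); [lia|]. now apply G4.
    + destruct (Z.eq_dec j k) as [->|Hjk]; [now apply reach_refl|].
      exfalso. replace j with (k + 1) in * by lia. parity.
    + apply (reach_step _ _ w); auto. apply G5; [lia|assumption].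
Qed.

Lemma profile_step (g : Z -> Z) k x :
  (forall j, g j - 1 <= g (j + 1) <= g j + 1) ->
  (forall j, Z.Odd (j + g j) -> g (j + 1) = g j) ->
  Z.Even (k + x) -> x < g k -> x + 1 <= g (k + 1) /\ x <= g (k + 2).
Proof.
  intros Hlip Hflat Hx Hlt.
  pose proof (Hlip k). pose proof (Hlip (k + 1)) as H1.
  replace (k + 1 + 1) with (k + 2) in H1 by ring.
  destruct (Z.Even_or_Odd (k + g k)) as [He|Ho].
  - assert (x <= g k - 2) by parity. lia.
  - pose proof (Hflat k Ho). lia.
Qed.

Section Separation.

Variables (om : config) (g : Z -> Z) (N : Z).
Hypothesis g_lipschitz : forall k, g k - 1 <= g (k + 1) <= g k + 1.
Hypothesis g_flat_odd : forall k, Z.Odd (k + g k) -> g (k + 1) = g k.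
Hypothesis g_reached : forall k, 0 <= k <= N -> Z.Even (k + g k) -> reach om (0, 0) (k, g k).

(* A site on the profile is reachable from o, so an avoiding path weakly below the profile
   is in fact strictly below it, and then one step cannot take it above. *)
Lemma reach_stays_below z z' :
  reach om z z' -> ~ reach om (0, 0) z' -> 0 <= fst z -> fst z' <= N + 1 ->
  snd z <= g (fst z) -> snd z' <= g (fst z').
Proof.
  induction 1 as [z _ | [k x] w z' [_ Hp] Ho Hs Hr IH]; intros Hno H0 HN Hle; [assumption|].
  simpl in *.
  assert (Hcol : fst w <= N + 1) by (pose proof (reach_fst_le _ _ _ Hr); lia).
  assert (Hlt : x < g k).
  { destruct (Z.eq_dec x (g k)) as [E|E]; [|lia].
    exfalso; apply Hno. apply (reach_trans _ _ (k, x)).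
    - rewrite E. apply g_reached; [destruct Hs as [-> | [-> | ->]]; simpl in *; lia|congruence].
    - eapply reach_step; eauto. split; simpl; [lia|exact Hp]. }
  destruct (profile_step g k x g_lipschitz g_flat_odd Hp Hlt).
  apply IH; auto; destruct Hs as [-> | [-> | ->]]; simpl; lia.
Qed.

End Separation.

Lemma xi_up_lt om t c :
  (forall x, ~ xi om (S t) x) -> xi om t c -> forall a, xi_up om (S t) a -> a < c.
Proof.
  intros Hdead Hc a [y [Hy Hr]].
  destruct (reach_path_profile _ _ _ Hc) as [g [G1 [G2 [G3 [G4 G5]]]]]; cbn [fst snd] in *.
  assert (Hg0 : g 0 = 0) by (apply G1; lia).
  assert (Hend : a <= g (Z.of_nat (S t))).
  { pose proof (Hdead a) as Hno. unfold xi in Hno.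
    destruct Hr as [Hr|Hr]; apply (reach_stays_below om g (Z.of_nat t) G3 G4 G5 _ _ Hr);
      simpl; auto; try lia.
    pose proof (G3 0) as G01; rewrite Z.add_0_l in G01.
    destruct (reach_inL _ _ _ Hr) as [_ Hp]; cbn [fst snd] in Hp.
    assert (y <= -1) by parity. lia. }
  rewrite G2 in Hend by lia.
  destruct (reach_inL_end _ _ _ Hc) as [_ Hpc]. destruct Hr as [Hr|Hr];
    destruct (reach_inL_end _ _ _ Hr) as [_ Hpa]; cbn [fst snd] in *;
    assert (a <> c) by parity; lia.
Qed.

Lemma xi_low_gt om t c :
  (forall x, ~ xi om (S t) x) -> xi om t c -> forall b, xi_low om (S t) b -> c < b.
Proof.
  intros Hdead Hc b [y [Hy Hr]].
  assert (Hback : forall w, om (mirror w) = mirror_config om w) by reflexivity.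
  assert (Hfwd : forall w, mirror_config om (mirror w) = om w)
    by (intro w; unfold mirror_config; now rewrite mirror_involutive).
  enough (- b < - c) by lia.
  apply (xi_up_lt (mirror_config om) t).
  - intros x Hx. apply (Hdead (- x)). exact (reach_mirror _ _ _ _ Hback Hx).
  - exact (reach_mirror _ _ _ _ Hfwd Hc).
  - exists (- y); split; [lia|].
    destruct Hr as [Hr|Hr]; [left|right]; exact (reach_mirror _ _ _ _ Hfwd Hr).
Qed.

Lemma xi_separated om t c :
  (forall x, ~ xi om (S t) x) -> xi om t c -> zlt (u_up om (S t)) (l_low om (S t)).
Proof.
  intros Hdead Hc. apply (zlt_zsup_zinf _ _ c).
  - exact (xi_up_lt om t c Hdead Hc).
  - exact (xi_low_gt om t c Hdead Hc).
Qed.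

Lemma xi_not_separated om n x : xi om n x -> ~ zlt (u_up om n) (l_low om n).
Proof.
  intros Hx. destruct n as [|n]; simpl; [lia|].
  apply (zsup_zinf_not_lt _ _ x); exists 0; (split; [lia|left; exact Hx]).
Qed.

Theorem lemma2p1 (om : config) :
  tau om = nat_inf (fun m => zlt (u_up om m) (l_low om m)).
Proof.
  apply nat_inf_eq_least_sub.
  - intros n Hsep x Hx. exact (xi_not_separated om n x Hx Hsep).
  - intros [|t] Hdead Hleast.
    + exfalso; apply (Hdead 0). apply reach_refl. split; simpl; [lia|now exists 0].
    + destruct (classic (exists c, xi om t c)) as [[c Hc]|Hnone].
      * exact (xi_separated om t c Hdead Hc).
      * assert (S t <= t)%nat by (apply Hleast; intros c Hc; apply Hnone; now exists c). lia.
Qed.
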